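(* For every integer $k\ge2$, the infimum $\alpha_*=\inf_{x\in\Delta^{d-1}}F^k(x)$ is attained at some point of $\Delta^{d-1}$, and $1\le\alpha_*\le 12\cdot3^{k-1}-3$.
   Context: Fix $k\ge2$ and $d=4\cdot3^{k-1}$. $\Delta^{d-1}=\{x=(x_1,\dots,x_d)\in\mathbb{R}^d: x_i>0,\ \sum_i x_i=1\}$. For $j=1,2,3,4$, $I_j=\{(j-1)3^{k-1}+1,\dots,j\cdot3^{k-1}\}$ and $\Sigma_j(x)=\sum_{l\in I_j}x_l$. Let $\sigma(t)=(1-t)/t$ for $t\in(0,1)$. For $i\in\{1,\dots,d\}$ let $j(i)=1$ if $i\equiv0\pmod4$, $j(i)=4$ if $i\equiv1$, $j(i)=3$ if $i\equiv2$, $j(i)=2$ if $i\equiv3\pmod 4$, and set $f_i(x)=\sigma(\Sigma_{j(i)}(x))\,\sigma(x_i)$. Define $F^k(x)=\max_{1\le i\le d}f_i(x)$ on $\Delta^{d-1}$. *)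

From Stdlib Require Import Reals Lra Lia.
Open Scope R_scope.

(* Vectors x in R^d are functions nat -> R, with coordinates x 1, ..., x d
   (indices outside 1..d are irrelevant). *)

Fixpoint sumto (f : nat -> R) (n : nat) : R :=
  match n with
  | O => 0
  | S n' => sumto f n' + f (S n')
  end.

Fixpoint maxto (g : nat -> R) (n : nat) : R :=
  match n with
  | O => g 1%nat
  | S n' => Rmax (maxto g n') (g (S n'))
  end.

Definition blk (k : nat) : nat := (3 ^ (k - 1))%nat.
Definition dim (k : nat) : nat := (4 * blk k)%nat.

Definition in_simplex (d : nat) (x : nat -> R) : Prop :=
  (forall i, (1 <= i <= d)%nat -> 0 < x i) /\ sumto x d = 1.

Definition Sigma (k j : nat) (x : nat -> R) : R :=
  sumto (fun t => x ((j - 1) * blk k + t)%nat) (blk k).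

Definition sigma (t : R) : R := (1 - t) / t.

Definition jmap (i : nat) : nat :=
  match (i mod 4)%nat with
  | O => 1%nat
  | 1%nat => 4%nat
  | 2%nat => 3%nat
  | _ => 2%nat
  end.

Definition fi (k i : nat) (x : nat -> R) : R :=
  sigma (Sigma k (jmap i) x) * sigma (x i).

Definition Fk (k : nat) (x : nat -> R) : R :=
  maxto (fun i => fi k i x) (dim k).

(* The four block sums add up to 1, so x_1 <= Sigma_1 <= 1 - Sigma_4 and already
   f_1 = sigma (Sigma_4) sigma (x_1) >= 1.  Conversely, a bound F^k(x) <= M keeps every
   coordinate of x away from 0: each block sum stays 1/(M+2) away from 1, and then f_i <= M
   bounds sigma (x_i).  So the infimum is a minimum of a continuous function over a compact
   set, and at the barycenter every f_i equals sigma (1/4) sigma (1/d) = 3 (d - 1). *)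

From Stdlib Require Import Reals Lra Lia Arith.
From mathcomp Require all_boot all_order all_algebra all_classical all_reals all_analysis.
From mathcomp Require Rstruct Rstruct_topology.
Open Scope R_scope.

Lemma sumto_ext f g n :
  (forall t, (1 <= t <= n)%nat -> f t = g t) -> sumto f n = sumto g n.
Proof.
  induction n as [|n IH]; intros H; simpl; auto.
  rewrite IH by (intros; apply H; lia). rewrite H by lia. reflexivity.
Qed.

Lemma sumto_add f a b :
  sumto f (a + b) = sumto f a + sumto (fun t => f (a + t)%nat) b.
Proof.
  induction b as [|b IH]; simpl.
  - rewrite Nat.add_0_r; ring.
  - rewrite Nat.add_succ_r; simpl; rewrite IH; ring.
Qed.

Lemma sumto_const c n : sumto (fun _ => c) n = INR n * c.
Proof. induction n as [|n IH]; simpl sumto; [simpl; ring|]. rewrite IH, S_INR; ring. Qed.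

Lemma sumto_mulr f c n : sumto (fun t => f t * c) n = sumto f n * c.
Proof. induction n as [|n IH]; simpl; [ring|]. rewrite IH; ring. Qed.

Lemma sumto_term_le f n t :
  (forall s, (1 <= s <= n)%nat -> 0 < f s) -> (1 <= t <= n)%nat -> f t <= sumto f n.
Proof.
  revert t; induction n as [|n IH]; intros t Hf Ht; [lia|]; simpl.
  assert (Hn : 0 <= sumto f n).
  { destruct n; [simpl; lra|].
    apply Rle_trans with (f 1%nat); [left; apply Hf; lia|apply IH; [intros; apply Hf|]; lia]. }
  pose proof (Hf (S n) ltac:(lia)).
  destruct (Nat.eq_dec t (S n)) as [->|Hne]; [lra|].
  assert (f t <= sumto f n) by (apply IH; [intros; apply Hf|]; lia). lra.
Qed.

Lemma sumto_gt0 f n :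
  (1 <= n)%nat -> (forall s, (1 <= s <= n)%nat -> 0 < f s) -> 0 < sumto f n.
Proof.
  intros Hn Hf. apply Rlt_le_trans with (f 1%nat); [apply Hf; lia|].
  apply sumto_term_le; auto; lia.
Qed.

Lemma maxto_ub g n i : (1 <= i <= n)%nat -> g i <= maxto g n.
Proof.
  induction n as [|n IH]; intros Hi; [lia|]; simpl.
  destruct (Nat.eq_dec i (S n)) as [->|Hne]; [apply Rmax_r|].
  destruct n; [replace i with 1%nat by lia; apply Rmax_l|].
  apply Rle_trans with (maxto g (S n)); [apply IH; lia|apply Rmax_l].
Qed.

Lemma maxto_ext g h n :
  (1 <= n)%nat -> (forall i, (1 <= i <= n)%nat -> g i = h i) -> maxto g n = maxto h n.
Proof.
  induction n as [|n IH]; intros Hn H; [lia|]; simpl.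
  rewrite (H (S n)) by lia; f_equal.
  destruct n; [apply H; lia|apply IH; [|intros; apply H]; lia].
Qed.

Lemma maxto_const c n : maxto (fun _ => c) n = c.
Proof. induction n as [|n IH]; simpl; [|rewrite IH; apply Rmax_left]; lra. Qed.

Lemma sigmaE t : t <> 0 -> sigma t = / t - 1.
Proof. intros; unfold sigma; field; auto. Qed.

Lemma sigma_le_iff t c : 0 < t -> 0 < c + 1 -> sigma t <= c <-> / (c + 1) <= t.
Proof.
  intros Ht Hc. rewrite sigmaE by lra.
  split; intros H.
  - rewrite <- (Rinv_inv t). apply Rinv_le_contravar; [apply Rinv_0_lt_compat|]; lra.
  - assert (/ t <= c + 1); [|lra].
    rewrite <- (Rinv_inv (c + 1)). apply Rinv_le_contravar; [apply Rinv_0_lt_compat|]; lra.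
Qed.

Lemma sigma_antimono a b : 0 < a <= b -> sigma b <= sigma a.
Proof.
  intros Hab. rewrite !sigmaE by lra.
  assert (/ b <= / a) by (apply Rinv_le_contravar; lra). lra.
Qed.

Lemma sigma_ge0 t : 0 < t <= 1 -> 0 <= sigma t.
Proof. intros Ht. unfold sigma, Rdiv. apply Rmult_le_pos; [|left; apply Rinv_0_lt_compat]; lra. Qed.

Lemma sigma_mul_ge1 a b : 0 < a -> 0 < b -> a + b <= 1 -> 1 <= sigma a * sigma b.
Proof.
  intros Ha Hb Hab. unfold sigma.
  assert (E : (1 - a) / a * ((1 - b) / b) - 1 = (1 - a - b) * / (a * b)) by (field; lra).
  assert (0 <= (1 - a - b) * / (a * b)).
  { apply Rmult_le_pos; [lra|left; apply Rinv_0_lt_compat; nra]. }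
  lra.
Qed.

(* [sigma] is decreasing, so [sigma e ^ 2 <= sigma a * sigma b <= M]. *)
Lemma common_ub_ge_of_sigma_mul_le a b e M :
  0 < a <= e -> 0 < b <= e -> 0 <= M -> sigma a * sigma b <= M -> / (M + 2) <= e.
Proof.
  intros Ha Hb HM Hab.
  destruct (Rle_lt_dec e 1) as [He1|He1].
  - assert (Hea := sigma_antimono a e Ha). assert (Heb := sigma_antimono b e Hb).
    assert (He0 := sigma_ge0 e ltac:(lra)).
    replace (M + 2) with (M + 1 + 1) by ring.
    apply sigma_le_iff; [lra|lra|]. nra.
  - apply Rle_trans with 1; [|lra].
    rewrite <- Rinv_1. apply Rinv_le_contravar; lra.
Qed.

Lemma jmap_succ_neq n : jmap (S n) <> jmap n.
Proof.
  unfold jmap. replace (S n) with (n + 1)%nat by lia.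
  rewrite Nat.Div0.add_mod by lia.
  pose proof (Nat.mod_upper_bound n 4 ltac:(lia)).
  destruct (n mod 4)%nat as [|[|[|[|r]]]]; simpl; try discriminate; lia.
Qed.

Lemma jmap_range i : (1 <= jmap i <= 4)%nat.
Proof. unfold jmap. destruct (i mod 4)%nat as [|[|[|[|r]]]]; lia. Qed.

Lemma jmap_avoid n j : exists t, (1 <= t <= 2)%nat /\ jmap (n + t) <> j.
Proof.
  destruct (Nat.eq_dec (jmap (n + 1)) j) as [E|E]; [|exists 1%nat; auto].
  exists 2%nat; split; [lia|]. rewrite <- E.
  replace (n + 2)%nat with (S (n + 1)) by lia. apply jmap_succ_neq.
Qed.

Lemma blk_ge3 k : (2 <= k)%nat -> (3 <= blk k)%nat.
Proof.
  intros Hk. unfold blk. destruct k as [|[|k]]; [lia|lia|].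
  replace (S (S k) - 1)%nat with (S k) by lia. simpl.
  pose proof (Nat.pow_nonzero 3 k ltac:(lia)). lia.
Qed.

Lemma INR_dim k : INR (dim k) = 4 * 3 ^ (k - 1).
Proof. unfold dim, blk. rewrite mult_INR, pow_INR. replace (INR 3) with 3 by (simpl; ring). simpl; ring. Qed.

Lemma block_index_range k j t :
  (1 <= j <= 4)%nat -> (1 <= t <= blk k)%nat -> (1 <= (j - 1) * blk k + t <= dim k)%nat.
Proof.
  intros Hj Ht. unfold dim.
  assert ((j - 1) * blk k <= 3 * blk k)%nat by (apply Nat.mul_le_mono_r; lia).
  revert H; generalize ((j - 1) * blk k)%nat; lia.
Qed.

Section Blocks.
Variable k : nat.
Hypothesis Hk : (2 <= k)%nat.

Lemma dim_ge12 : (12 <= dim k)%nat.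
Proof. pose proof (blk_ge3 k Hk). unfold dim. lia. Qed.

Lemma Sigma_ext j x y : (1 <= j <= 4)%nat ->
  (forall i, (1 <= i <= dim k)%nat -> x i = y i) -> Sigma k j x = Sigma k j y.
Proof.
  intros Hj H. apply sumto_ext. intros t Ht. apply H, block_index_range; auto.
Qed.

Lemma Sigma_term_le j x t : (1 <= j <= 4)%nat -> in_simplex (dim k) x ->
  (1 <= t <= blk k)%nat -> x ((j - 1) * blk k + t)%nat <= Sigma k j x.
Proof.
  intros Hj [Hx _] Ht.
  apply (sumto_term_le (fun t => x ((j - 1) * blk k + t)%nat)); auto.
  intros s Hs. apply Hx, block_index_range; auto.
Qed.

Lemma Sigma_gt0 j x : (1 <= j <= 4)%nat -> in_simplex (dim k) x -> 0 < Sigma k j x.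
Proof.
  intros Hj Hx. pose proof (blk_ge3 k Hk).
  apply Rlt_le_trans with (x ((j - 1) * blk k + 1)%nat).
  - apply (proj1 Hx), block_index_range; lia.
  - apply Sigma_term_le; auto; lia.
Qed.

Lemma Sigma_sum x : Sigma k 1 x + Sigma k 2 x + Sigma k 3 x + Sigma k 4 x = sumto x (dim k).
Proof.
  unfold dim, Sigma. set (m := blk k).
  replace (4 * m)%nat with (m + m + m + m)%nat by lia.
  rewrite !sumto_add.
  f_equal; [f_equal; [f_equal|]|]; apply sumto_ext; intros; f_equal; lia.
Qed.

Lemma Sigma_pair_le1 x j j' : in_simplex (dim k) x ->
  (1 <= j <= 4)%nat -> (1 <= j' <= 4)%nat -> j <> j' -> Sigma k j x + Sigma k j' x <= 1.
Proof.
  intros Hx Hj Hj' Hne.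
  pose proof (Sigma_sum x) as E. rewrite (proj2 Hx) in E.
  pose proof (Sigma_gt0 1 x ltac:(lia) Hx). pose proof (Sigma_gt0 2 x ltac:(lia) Hx).
  pose proof (Sigma_gt0 3 x ltac:(lia) Hx). pose proof (Sigma_gt0 4 x ltac:(lia) Hx).
  destruct j as [|[|[|[|[|j]]]]]; try lia; destruct j' as [|[|[|[|[|j']]]]]; try lia; lra.
Qed.

Lemma Fk_ext x y : (forall i, (1 <= i <= dim k)%nat -> x i = y i) -> Fk k x = Fk k y.
Proof.
  intros H. apply maxto_ext; [pose proof dim_ge12; lia|].
  intros i Hi. unfold fi. rewrite (Sigma_ext (jmap i) x y (jmap_range i) H), (H i Hi). reflexivity.
Qed.

Lemma fi_le_Fk i x : (1 <= i <= dim k)%nat -> fi k i x <= Fk k x.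
Proof. apply (maxto_ub (fun i => fi k i x)). Qed.

Lemma Fk_ge1 x : in_simplex (dim k) x -> 1 <= Fk k x.
Proof.
  intros Hx. pose proof dim_ge12.
  apply Rle_trans with (fi k 1 x); [|apply fi_le_Fk; lia].
  pose proof (Sigma_term_le 1 x 1 ltac:(lia) Hx ltac:(pose proof (blk_ge3 k Hk); lia)) as T1.
  pose proof (Sigma_pair_le1 x 1 4 Hx ltac:(lia) ltac:(lia) ltac:(lia)).
  assert (0 < x 1%nat) by (apply (proj1 Hx); lia).
  replace ((1 - 1) * blk k + 1)%nat with 1%nat in T1 by lia.
  unfold fi. change (jmap 1) with 4%nat. rewrite Rmult_comm.
  apply sigma_mul_ge1; [lra|apply Sigma_gt0; auto; lia|lra].
Qed.

(* Pick an index [l] in another block whose own [Sigma]-block also differs from [j];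
   then [x l] and [Sigma (jmap l)] are both at most [1 - Sigma j]. *)
Lemma Sigma_compl_lb x j M : in_simplex (dim k) x -> 0 <= M -> Fk k x <= M ->
  (1 <= j <= 4)%nat -> / (M + 2) <= 1 - Sigma k j x.
Proof.
  intros Hx HM HF Hj. pose proof (blk_ge3 k Hk).
  set (b := if Nat.eqb j 1 then 2%nat else 1%nat).
  assert (Hb : (1 <= b <= 4)%nat /\ b <> j) by (unfold b; destruct (Nat.eqb_spec j 1); lia).
  destruct (jmap_avoid ((b - 1) * blk k) j) as (t & Ht & Hl).
  set (l := ((b - 1) * blk k + t)%nat) in Hl.
  assert (Hld : (1 <= l <= dim k)%nat) by (apply block_index_range; lia).
  pose proof (jmap_range l).
  assert (Hxl : x l <= Sigma k b x) by (apply Sigma_term_le; auto; lia).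
  pose proof (Sigma_pair_le1 x j b Hx Hj ltac:(lia) ltac:(lia)).
  pose proof (Sigma_pair_le1 x j (jmap l) Hx Hj ltac:(lia) ltac:(auto)).
  apply (common_ub_ge_of_sigma_mul_le (Sigma k (jmap l) x) (x l)); auto.
  - split; [apply Sigma_gt0|]; auto; lra.
  - split; [apply (proj1 Hx)|]; auto; lra.
  - eapply Rle_trans; [apply fi_le_Fk|]; eauto.
Qed.

(* With [s = Sigma (jmap i) <= (M+1)/(M+2)] we get [sigma s >= 1/(M+1)],
   hence [sigma (x i) <= M (M+1)]. *)
Lemma coord_lb x M : in_simplex (dim k) x -> 0 <= M -> Fk k x <= M ->
  forall i, (1 <= i <= dim k)%nat -> / (M * (M + 1) + 1) <= x i.
Proof.
  intros Hx HM HF i Hi.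
  set (s := Sigma k (jmap i) x).
  assert (Hs0 : 0 < s) by (apply Sigma_gt0; auto; apply jmap_range).
  assert (Hs1 : s <= (M + 1) / (M + 2)).
  { pose proof (Sigma_compl_lb x (jmap i) M Hx HM HF (jmap_range i)).
    replace ((M + 1) / (M + 2)) with (1 - / (M + 2)) by (field; lra). fold s in H. lra. }
  assert (Hsig : / (M + 1) <= sigma s).
  { replace (/ (M + 1)) with (sigma ((M + 1) / (M + 2))) by (unfold sigma; field; lra).
    apply sigma_antimono; lra. }
  assert (Hfi : sigma s * sigma (x i) <= M) by (eapply Rle_trans; [apply fi_le_Fk|]; eauto).
  assert (HM1 : / (M + 1) * (M + 1) = 1) by (field; lra).
  apply sigma_le_iff; [apply (proj1 Hx); auto|nra|].
  destruct (Rle_lt_dec (sigma (x i)) 0); [nra|].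
  assert (/ (M + 1) * sigma (x i) <= M) by nra. nra.
Qed.

Lemma Fk_uniform : Fk k (fun _ => / INR (dim k)) = 3 * INR (dim k) - 3.
Proof.
  pose proof dim_ge12 as Hd. apply le_INR in Hd. simpl in Hd.
  unfold Fk. rewrite <- (maxto_const (3 * INR (dim k) - 3) (dim k)).
  apply maxto_ext; [pose proof dim_ge12; lia|]. intros i Hi.
  unfold fi, Sigma. rewrite sumto_const.
  assert (Hb : 0 < INR (blk k)) by (apply lt_0_INR; pose proof (blk_ge3 k Hk); lia).
  replace (INR (blk k) * / INR (dim k)) with (/ 4)
    by (unfold dim; rewrite mult_INR; replace (INR 4) with 4 by (simpl; ring); field; lra).
  rewrite !sigmaE, !Rinv_inv by (try apply Rinv_neq_0_compat; lra). ring.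
Qed.

End Blocks.

Module Box.
Import all_boot all_order all_algebra all_classical all_reals all_analysis.
Import Rstruct Rstruct_topology.
Import Order.TTheory GRing.Theory Num.Theory numFieldNormedType.Exports.
Local Open Scope classical_set_scope.
Local Open Scope ring_scope.

Definition vec (d : nat) := 'rV[R]_d.

(* 1-based coordinates, as for points [nat -> R] of the simplex; 0 out of range. *)
Definition coord {d} (w : vec d) (n : nat) : R :=
  if insub n.-1 is Some i then w ord0 i else 0.

Definition row_of (d : nat) (x : nat -> R) : vec d := \row_(i < d) x i.+1.

Definition cont_at {d} (v : vec d) (g : vec d -> R) := {for v, continuous g}.

Definition in_box {d} (a b : R) (v : vec d) :=
  forall n, le 1 n /\ le n d -> (a <= coord v n <= b)%coqR.

Section Continuity.
Variable d : nat.
Implicit Types (v : vec d) (f g : vec d -> R).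

Lemma cont_cst v c : cont_at v (fun _ => c).
Proof. exact: cst_continuous. Qed.

Lemma cont_coord v n : cont_at v (coord^~ n).
Proof. by rewrite /cont_at /coord; case: insub => [i|]; [exact: coord_continuous|exact: cst_continuous]. Qed.

Lemma cont_add v f g : cont_at v f -> cont_at v g -> cont_at v (fun w => Rplus (f w) (g w)).
Proof. by move=> hf hg; apply: (@cvgD _ R^o _ (nbhs v) _ f g _ _ hf hg). Qed.

Lemma cont_opp v f : cont_at v f -> cont_at v (fun w => Ropp (f w)).
Proof. by move=> hf; apply: (@cvgN _ R^o _ (nbhs v) _ f _ hf). Qed.

Lemma cont_mul v f g : cont_at v f -> cont_at v g -> cont_at v (fun w => Rmult (f w) (g w)).
Proof. by move=> hf hg; apply: (@cvgM _ _ (nbhs v) _ f g _ _ hf hg). Qed.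

Lemma cont_inv v f : f v <> 0%coqR -> cont_at v f -> cont_at v (fun w => Rinv (f w)).
Proof. by move=> h hf; apply: (@cvgV _ _ (nbhs v) _ f _ (introN eqP h) hf). Qed.

Lemma RmaxE (x y : R) : Rmax x y = Num.max x y.
Proof.
rewrite /Rmax; case: Rle_dec => [/RleP h|/Rnot_le_lt/RltP h].
  by rewrite (max_idPr h).
by rewrite (max_idPl (ltW h)).
Qed.

Lemma cont_max v f g : cont_at v f -> cont_at v g -> cont_at v (fun w => Rmax (f w) (g w)).
Proof.
move=> hf hg; rewrite /cont_at (_ : (fun w => _) = f \max g); last first.
  by apply/funext => w; rewrite RmaxE.
exact: continuous_max.
Qed.

End Continuity.

Lemma coord_row_of d x n : le 1 n /\ le n d -> coord (row_of d x) n = x n.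
Proof.
move=> [/ssrnat.leP n1 /ssrnat.leP nd]; rewrite /coord.
case: insubP => [i _ /= iE|/negP[]]; last by rewrite prednK.
by rewrite mxE iE prednK.
Qed.

Lemma in_boxE d a b (v : vec d) :
  in_box a b v <-> forall i : 'I_d, a <= v ord0 i <= b.
Proof.
have coordE (i : 'I_d) : coord v i.+1 = v ord0 i by rewrite /coord /= valK.
split=> [H i|H n [/ssrnat.leP n1 /ssrnat.leP nd]].
  have [/RleP ? /RleP ?] := H i.+1 (conj (le_n_S _ _ (Nat.le_0_l _)) (ssrnat.ltP (ltn_ord i))).
  by apply/andP; split; rewrite -coordE.
have ltnd : (n.-1 < d)%N by rewrite prednK.
have /andP[/RleP ? /RleP ?] := H (Ordinal ltnd).
by rewrite -(prednK n1) (coordE (Ordinal ltnd)).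
Qed.

Lemma box_min d (a b : R) (G : vec d -> R) : (a <= b)%coqR ->
  (forall v, in_box a b v -> cont_at v G) ->
  exists v, in_box a b v /\ forall w, in_box a b w -> (G v <= G w)%coqR.
Proof.
move=> /RleP ab cG.
pose A := [set v : vec d | forall i, `[a, b]%classic (v ord0 i)].
have inA v : v \in A <-> in_box a b v.
  by rewrite in_boxE inE /A /=; split=> H i; move: (H i); rewrite in_itv.
have cA : compact A.
  by apply: (@rV_compact _ d (fun=> `[a, b]%classic)) => i; exact: segment_compact.
have A0 : A !=set0 by exists (const_mx a) => i /=; rewrite mxE in_itv /= lexx ab.
have [c cA' cmin] := compact_EVT_min A0 cA
  (continuous_in_subspaceT (fun v vA => cG v (proj1 (inA v) vA))).
by exists c; split=> [|w /inA wA]; [apply/inA|apply/RleP; exact: cmin].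
Qed.

End Box.

Lemma in_simplex_le1 d x : in_simplex d x -> forall i, (1 <= i <= d)%nat -> x i <= 1.
Proof. intros [Hx Hs] i Hi. rewrite <- Hs. apply sumto_term_le; auto. Qed.

Lemma uniform_in_simplex d : (1 <= d)%nat -> in_simplex d (fun _ => / INR d).
Proof.
  intros Hd. assert (0 < INR d) by (apply lt_0_INR; lia).
  split; [intros; apply Rinv_0_lt_compat; lra|].
  rewrite sumto_const. field. lra.
Qed.

Section Normalize.
Variable d : nat.

Definition normalize (w : Box.vec d) (n : nat) : R := Box.coord w n / sumto (Box.coord w) d.

Lemma cont_sumto v (g : nat -> Box.vec d -> R) n :
  (forall t, (1 <= t <= n)%nat -> Box.cont_at v (g t)) ->
  Box.cont_at v (fun w => sumto (fun t => g t w) n).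
Proof.
  induction n as [|n IH]; intros H; [apply Box.cont_cst|].
  apply (Box.cont_add d v _ (g (S n))); [apply IH; intros; apply H|apply H]; lia.
Qed.

Lemma cont_maxto v (g : nat -> Box.vec d -> R) n : (1 <= n)%nat ->
  (forall t, (1 <= t <= n)%nat -> Box.cont_at v (g t)) ->
  Box.cont_at v (fun w => maxto (fun t => g t w) n).
Proof.
  induction n as [|n IH]; intros Hn H; [lia|].
  destruct n; [apply (Box.cont_max d v (g 1%nat)); apply H; lia|].
  apply (Box.cont_max d v _ (g (S (S n)))); [apply IH; [|intros; apply H]|apply H]; lia.
Qed.

Lemma cont_sigma (v : Box.vec d) (f : Box.vec d -> R) : f v <> 0 -> Box.cont_at v f -> Box.cont_at v (fun w => sigma (f w)).
Proof.
  intros Hv Hf. unfold sigma, Rdiv, Rminus.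
  apply Box.cont_mul; [apply Box.cont_add; [apply Box.cont_cst|apply Box.cont_opp; auto]|].
  apply Box.cont_inv; auto.
Qed.

Lemma cont_normalize (v : Box.vec d) n : sumto (Box.coord v) d <> 0 -> Box.cont_at v (fun w => normalize w n).
Proof.
  intros Hv. apply Box.cont_mul; [apply Box.cont_coord|].
  apply Box.cont_inv; auto.
  apply (cont_sumto v (fun t w => Box.coord w t)). intros; apply Box.cont_coord.
Qed.

Lemma sumto_coord_gt0 a b (v : Box.vec d) : (1 <= d)%nat -> 0 < a -> Box.in_box a b v -> 0 < sumto (Box.coord v) d.
Proof.
  intros Hd Ha Hv. apply sumto_gt0; auto.
  intros s Hs. destruct (Hv s Hs). lra.
Qed.

Lemma normalize_in_simplex a b (v : Box.vec d) : (1 <= d)%nat -> 0 < a -> Box.in_box a b v ->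
  in_simplex d (normalize v).
Proof.
  intros Hd Ha Hv. pose proof (sumto_coord_gt0 a b v Hd Ha Hv).
  split.
  - intros n Hn. destruct (Hv n Hn). apply Rdiv_lt_0_compat; lra.
  - unfold normalize, Rdiv. rewrite sumto_mulr. field. lra.
Qed.

Lemma normalize_row_of x : in_simplex d x ->
  forall n, (1 <= n <= d)%nat -> normalize (Box.row_of d x) n = x n.
Proof.
  intros [_ Hs] n Hn. unfold normalize.
  rewrite (sumto_ext _ x) by (intros; apply Box.coord_row_of; auto).
  rewrite Hs, Box.coord_row_of by auto. field.
Qed.

End Normalize.

Lemma cont_Fk_normalize k a b v : (2 <= k)%nat -> 0 < a -> Box.in_box a b v ->
  Box.cont_at v (fun w => Fk k (normalize (dim k) w)).
Proof.
  intros Hk Ha Hv. pose proof (dim_ge12 k Hk).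
  pose proof (normalize_in_simplex _ a b v ltac:(lia) Ha Hv) as Hx.
  pose proof (sumto_coord_gt0 _ a b v ltac:(lia) Ha Hv).
  apply (cont_maxto _ v (fun i w => fi k i (normalize (dim k) w))); [lia|].
  intros i Hi. apply Box.cont_mul; apply cont_sigma.
  - pose proof (Sigma_gt0 k Hk (jmap i) _ (jmap_range i) Hx). lra.
  - apply (cont_sumto _ v (fun t w => normalize (dim k) w ((jmap i - 1) * blk k + t)%nat)).
    intros; apply cont_normalize; lra.
  - pose proof (proj1 Hx i Hi). lra.
  - apply cont_normalize; lra.
Qed.

(* Any [x] with [Fk k x <= Fk k x1] has all coordinates at least [a] (see [coord_lb]), so
   it suffices to minimise [Fk k] over the image of the compact box [[a, 1]^d] under
   normalisation. *)
Lemma Fk_attains_min k x1 : (2 <= k)%nat -> in_simplex (dim k) x1 ->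
  exists x0, in_simplex (dim k) x0 /\
    forall x, in_simplex (dim k) x -> Fk k x0 <= Fk k x.
Proof.
  intros Hk Hx1. pose proof (dim_ge12 k Hk).
  pose proof (Fk_ge1 k Hk x1 Hx1) as HM. set (M := Fk k x1) in HM.
  set (a := / (M * (M + 1) + 1)).
  assert (Ha : 0 < a) by (apply Rinv_0_lt_compat; nra).
  assert (Ha1 : a <= 1) by (rewrite <- Rinv_1; apply Rinv_le_contravar; nra).
  assert (Hbox : forall x, in_simplex (dim k) x -> Fk k x <= M ->
    Box.in_box a 1 (Box.row_of (dim k) x)).
  { intros x Hx HF n Hn. rewrite Box.coord_row_of by auto.
    split; [apply (coord_lb k Hk x M)|apply (in_simplex_le1 (dim k) x)]; auto; lra. }
  assert (Hrow : forall x, in_simplex (dim k) x ->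
    Fk k (normalize (dim k) (Box.row_of (dim k) x)) = Fk k x).
  { intros x Hx. apply Fk_ext; auto. apply normalize_row_of; auto. }
  destruct (Box.box_min (dim k) a 1 (fun w => Fk k (normalize (dim k) w)) Ha1)
    as [v [Hv Hmin]].
  { intros v Hv. apply (cont_Fk_normalize k a 1); auto. }
  exists (normalize (dim k) v). split; [apply (normalize_in_simplex _ a 1); auto; lia|].
  intros x Hx.
  assert (Hv1 : Fk k (normalize (dim k) v) <= M).
  { unfold M. rewrite <- (Hrow x1 Hx1). apply Hmin, Hbox; auto. apply Rle_refl. }
  destruct (Rle_lt_dec (Fk k x) M) as [HxM|HxM]; [|lra].
  rewrite <- (Hrow x Hx). apply Hmin, Hbox; auto.
Qed.

Theorem mainTheorem5 : forall k : nat, (2 <= k)%nat ->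
  exists x0 : nat -> R,
    in_simplex (dim k) x0 /\
    (forall x : nat -> R, in_simplex (dim k) x -> Fk k x0 <= Fk k x) /\
    1 <= Fk k x0 /\ Fk k x0 <= 12 * 3 ^ (k - 1) - 3.
Proof.
  intros k Hk.
  assert (Hu : in_simplex (dim k) (fun _ => / INR (dim k)))
    by (apply uniform_in_simplex; pose proof (dim_ge12 k Hk); lia).
  destruct (Fk_attains_min k _ Hk Hu) as [x0 [Hx0 Hmin]].
  exists x0. split; [|split; [|split]]; auto.
  - apply Fk_ge1; auto.
  - apply Rle_trans with (Fk k (fun _ => / INR (dim k))); auto.
    rewrite Fk_uniform, INR_dim by auto. lra.
Qed.
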